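(* Let $G$ be a modular noetherian right $\ell$-group. Define $\deg' : G^- \to \mathbb{Z}_{\geq 0}$ by $\deg'(g) = k$ whenever $g = x_k x_{k-1} \cdots x_1$ with all $x_i \in X(G^-)$. Then there is a unique group homomorphism $\deg : G \to \mathbb{Z}$ with $\deg(g) = \deg'(g)$ for all $g \in G^-$. It is given by $\deg(g_2^{-1} g_1) = \deg'(g_1) - \deg'(g_2)$ for $g_1,g_2 \in G^-$.
   Context: A right $\ell$-group is a group $G$ (identity $e$) with a right-invariant partial order $\leq$ ($x \leq y \Rightarrow xz \leq yz$) under which $G$ is a lattice. It is modular if this lattice is modular. It is noetherian if for every $g \in G$ the set $\{h : h \geq g\}$ satisfies the descending chain condition and the set $\{h : h \leq g\}$ satisfies the ascending chain condition. $G^- := \{g : g \leq e\}$. $X(G^-) := \{x \in G : x < e$ and there is no $y$ with $x < y < e\}$ is the set of dual atoms. In a modular noetherian right $\ell$-group, every element of $G^-$ is a product of elements of $X(G^-)$, and any two such factorizations of the same element have the same number of factors. Hence $\deg'$ is a well-defined monoid homomorphism. *)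

From Stdlib Require Import ZArith List.
Import ListNotations.

Record right_lgroup := RightLGroup {
  carrier :> Type;
  mul : carrier -> carrier -> carrier;
  inv : carrier -> carrier;
  e : carrier;
  le : carrier -> carrier -> Prop;
  meet : carrier -> carrier -> carrier;
  join : carrier -> carrier -> carrier;
  mulA : forall x y z, mul x (mul y z) = mul (mul x y) z;
  mul1g : forall x, mul e x = x;
  mulVg : forall x, mul (inv x) x = e;
  le_refl : forall x, le x x;
  le_anti : forall x y, le x y -> le y x -> x = y;
  le_trans : forall x y z, le x y -> le y z -> le x z;
  le_mulr : forall x y z, le x y -> le (mul x z) (mul y z);
  meet_l : forall x y, le (meet x y) x;
  meet_r : forall x y, le (meet x y) y;
  meet_glb : forall x y z, le z x -> le z y -> le z (meet x y);
  join_l : forall x y, le x (join x y);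
  join_r : forall x y, le y (join x y);
  join_lub : forall x y z, le x z -> le y z -> le (join x y) z
}.

Arguments mul {r}.
Arguments inv {r}.
Arguments e {r}.
Arguments le {r}.
Arguments meet {r}.
Arguments join {r}.

Definition lt {G : right_lgroup} (x y : G) : Prop := le x y /\ x <> y.

Definition modular (G : right_lgroup) : Prop :=
  forall a b c : G, le a c -> join a (meet b c) = meet (join a b) c.

Definition noetherian (G : right_lgroup) : Prop :=
  forall g : G,
    (forall f : nat -> G, (forall n, le g (f n)) -> (forall n, le (f (S n)) (f n)) ->
       exists N, forall n, N <= n -> f n = f N) /\
    (forall f : nat -> G, (forall n, le (f n) g) -> (forall n, le (f n) (f (S n))) ->
       exists N, forall n, N <= n -> f n = f N).

Definition negcone {G : right_lgroup} (g : G) : Prop := le g e.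

Definition dual_atom {G : right_lgroup} (x : G) : Prop :=
  lt x e /\ ~ (exists y : G, lt x y /\ lt y e).

Definition prodl {G : right_lgroup} (s : list G) : G := fold_right mul e s.

(* degp g k  <->  g = x_k ... x_1 with all x_i in X(G^-), i.e. deg'(g) = k *)
Definition degp {G : right_lgroup} (g : G) (k : nat) : Prop :=
  exists s : list G, length s = k /\ Forall dual_atom s /\ g = prodl s.

Definition group_hom_Z {G : right_lgroup} (d : G -> Z) : Prop :=
  forall x y : G, d (mul x y) = (d x + d y)%Z.

(* Jordan-Dedekind for G^-: by modularity, if a <> b both cover g then both are
   covered by a \/ b (the diamond lemma), and the noetherian condition yields
   maximal counterexamples and covers, so every g <= e factors into dual atoms
   and all such factorizations have the same length deg'(g); deg' is additive.
   Every g is a left fraction a2^-1 a1 with a1, a2 in G^- (take a2 = e /\ g^-1),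
   and G^- satisfies the left Ore condition, so deg'(a1) - deg'(a2) does not
   depend on the fraction; this is deg. *)
From Stdlib Require Import ZArith List Lia Classical ClassicalEpsilon ChoiceFacts.
Import ListNotations.

Lemma exists_extremal (A : Type) (P : A -> Prop) (R : A -> A -> Prop) (x0 : A) :
  P x0 ->
  (forall f : nat -> A, (forall n, P (f n)) -> ~ (forall n, R (f n) (f (S n)))) ->
  exists x, P x /\ forall y, P y -> ~ R x y.
Proof.
  intros Px0 no_chain. apply NNPP; intro no_extremal.
  assert (step : forall x, exists y, P x -> P y /\ R x y).
  { intro x. destruct (classic (P x)) as [Px | nPx].
    - apply NNPP; intro no_step. apply no_extremal. exists x. split; [exact Px |].
      intros y Py Rxy. apply no_step. exists y. auto.
    - exists x0. intro Px. contradiction. }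
  destruct (functional_choice_imp_functional_dependent_choice choice _ step x0)
    as [f [f0 Hf]].
  assert (Pf : forall n, P (f n)).
  { induction n as [| n IH]; [rewrite f0; exact Px0 | exact (proj1 (Hf n IH))]. }
  apply (no_chain f Pf). intro n. exact (proj2 (Hf n (Pf n))).
Qed.

Section RightLGroup.

Variable G : right_lgroup.

Lemma mulgV (x : G) : mul x (inv x) = e.
Proof.
  rewrite <- (mul1g G (mul x (inv x))), <- (mulVg G (inv x)) at 1.
  rewrite <- mulA, (mulA _ (inv x) x (inv x)), mulVg, mul1g.
  apply mulVg.
Qed.

Lemma mulg1 (x : G) : mul x e = x.
Proof. rewrite <- (mulVg G x), mulA, mulgV. apply mul1g. Qed.

Lemma mulgK (x y : G) : mul (mul y x) (inv x) = y.
Proof. rewrite <- mulA, mulgV. apply mulg1. Qed.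

Lemma mulgKV (x y : G) : mul (mul y (inv x)) x = y.
Proof. rewrite <- mulA, mulVg. apply mulg1. Qed.

Lemma mulKVg (x y : G) : mul x (mul (inv x) y) = y.
Proof. rewrite mulA, mulgV. apply mul1g. Qed.

Lemma mulIg (x y z : G) : mul y x = mul z x -> y = z.
Proof. intro H. rewrite <- (mulgK x y), H. apply mulgK. Qed.

Lemma lt_le_trans (x y z : G) : lt x y -> le y z -> lt x z.
Proof.
  intros [Hxy Hne] Hyz. split; [exact (le_trans G _ _ _ Hxy Hyz) |].
  intros <-. apply Hne. exact (le_anti G _ _ Hxy Hyz).
Qed.

Lemma lt_mulr (x y z : G) : lt x y -> lt (mul x z) (mul y z).
Proof.
  intros [Hle Hne]. split; [exact (le_mulr G _ _ _ Hle) |].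
  intro H. exact (Hne (mulIg _ _ _ H)).
Qed.

Lemma lt_mulr_inv (x y z : G) : lt (mul x z) (mul y z) -> lt x y.
Proof. intro H. rewrite <- (mulgK z x), <- (mulgK z y). exact (lt_mulr _ _ _ H). Qed.

Lemma negcone_mul (a b : G) : negcone a -> negcone b -> negcone (mul a b).
Proof.
  intros Ha Hb. apply le_trans with (mul e b); [exact (le_mulr G _ _ _ Ha) |].
  rewrite mul1g. exact Hb.
Qed.

Lemma join_comm (x y : G) : join x y = join y x.
Proof. apply le_anti; apply join_lub; first [apply join_l | apply join_r]. Qed.

Lemma join_eq_l (x y : G) : le y x -> join x y = x.
Proof. intro H. apply le_anti; [apply join_lub; [apply le_refl | exact H] | apply join_l]. Qed.

Lemma meet_eq_r (x y : G) : le y x -> meet x y = y.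
Proof. intro H. apply le_anti; [apply meet_r | apply meet_glb; [exact H | apply le_refl]]. Qed.

Definition covby (a b : G) : Prop := lt a b /\ ~ (exists z, lt a z /\ lt z b).

Lemma covby_mulr (a b z : G) : covby a b -> covby (mul a z) (mul b z).
Proof.
  intros [Hab Hnone]. split; [exact (lt_mulr _ _ _ Hab) |].
  intros [w [Haw Hwb]]. apply Hnone. exists (mul w (inv z)).
  split; apply (lt_mulr_inv _ _ z); rewrite mulgKV; assumption.
Qed.

Lemma dual_atom_covby (x h : G) : dual_atom x -> covby (mul x h) h.
Proof. intro Hx. pose proof (covby_mulr _ _ h Hx) as H. rewrite mul1g in H. exact H. Qed.

Lemma covby_dual_atom (a b : G) : covby a b -> dual_atom (mul a (inv b)).
Proof. intro Hab. pose proof (covby_mulr _ _ (inv b) Hab) as H. rewrite mulgV in H. exact H. Qed.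

Lemma covby_between (g b w : G) : covby g b -> le g w -> le w b -> w = g \/ w = b.
Proof.
  intros [_ Hnone] Hgw Hwb.
  destruct (classic (w = g)) as [-> | Hwg]; [now left |].
  destruct (classic (w = b)) as [-> | Hwb']; [now right |].
  exfalso. apply Hnone. exists w. split; split; auto.
Qed.

Lemma prodl_cat (s t : list G) : prodl (s ++ t) = mul (prodl s) (prodl t).
Proof.
  induction s as [| x s IH]; simpl; [now rewrite mul1g |].
  unfold prodl in *. simpl. rewrite IH. apply mulA.
Qed.

Lemma degp_e : degp (@e G) 0.
Proof. exists []. simpl. auto. Qed.

Lemma degp_0 (g : G) : degp g 0 -> g = e.
Proof. intros [[| x s] [Hlen [_ ->]]]; [reflexivity | discriminate]. Qed.

Lemma degp_covby (g h : G) (k : nat) : covby g h -> degp h k -> degp g (S k).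
Proof.
  intros Hgh [s [Hlen [Hs ->]]]. exists (mul g (inv (prodl s)) :: s).
  simpl. repeat split; auto.
  - constructor; [exact (covby_dual_atom _ _ Hgh) | exact Hs].
  - symmetry. apply mulgKV.
Qed.

Lemma degp_SP (g : G) (k : nat) : degp g (S k) -> exists h, covby g h /\ degp h k.
Proof.
  intros [[| x s] [Hlen [Hs ->]]]; [discriminate |].
  inversion Hs as [| ? ? Hx Hs']; subst. exists (prodl s). split.
  - exact (dual_atom_covby _ _ Hx).
  - exists s. simpl in Hlen. auto.
Qed.

Lemma degp_negcone (g : G) (k : nat) : degp g k -> negcone g.
Proof.
  revert g. induction k as [| k IH]; intros g Hg.
  - rewrite (degp_0 _ Hg). apply le_refl.
  - destruct (degp_SP _ _ Hg) as [h [[[Hgh _] _] Hh]].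
    exact (le_trans G _ _ _ Hgh (IH _ Hh)).
Qed.

Lemma degp_e_inv (k : nat) : degp (@e G) k -> k = 0.
Proof.
  destruct k as [| k]; [reflexivity |]. intro Hk. exfalso.
  destruct (degp_SP _ _ Hk) as [h [[Heh _] Hh]].
  destruct (lt_le_trans _ _ _ Heh (degp_negcone _ _ Hh)) as [_ Hne].
  exact (Hne eq_refl).
Qed.

Lemma degp_cat (a b : G) (k m : nat) : degp a k -> degp b m -> degp (mul a b) (k + m).
Proof.
  intros [s [Hs_len [Hs ->]]] [t [Ht_len [Ht ->]]]. exists (s ++ t).
  rewrite length_app, prodl_cat. repeat split; auto. apply Forall_app. auto.
Qed.

Definition denom (g : G) : G := meet e (inv g).

Definition degn (g : G) : nat := epsilon (inhabits 0) (degp g).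

Definition deg (g : G) : Z :=
  (Z.of_nat (degn (mul (denom g) g)) - Z.of_nat (degn (denom g)))%Z.

Lemma negcone_denom (g : G) : negcone (denom g).
Proof. apply meet_l. Qed.

Lemma negcone_denom_mul (g : G) : negcone (mul (denom g) g).
Proof. unfold negcone, denom. rewrite <- (mulVg G g). apply le_mulr, meet_r. Qed.

Lemma negcone_fraction (g : G) : exists a1 a2, negcone a1 /\ negcone a2 /\ mul a2 g = a1.
Proof.
  exists (mul (denom g) g), (denom g).
  split; [apply negcone_denom_mul | split; [apply negcone_denom | reflexivity]].
Qed.

Lemma negcone_left_ore (a b : G) :
  exists c d, negcone c /\ negcone d /\ mul c a = mul d b.
Proof.
  destruct (negcone_fraction (mul a (inv b))) as [d [c [Hd [Hc Hcd]]]].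
  exists c, d. split; [exact Hc | split; [exact Hd |]].
  rewrite <- Hcd, mulA, mulgKV. reflexivity.
Qed.

Section Noetherian.

Hypothesis Hn : noetherian G.

Lemma no_bounded_ascent (g : G) (f : nat -> G) :
  (forall n, le (f n) g) -> ~ (forall n, lt (f n) (f (S n))).
Proof.
  intros Hbound Hlt.
  destruct (proj2 (Hn g) f Hbound (fun n => proj1 (Hlt n))) as [N HN].
  apply (proj2 (Hlt N)). symmetry. apply HN. lia.
Qed.

Lemma no_bounded_descent (g : G) (f : nat -> G) :
  (forall n, le g (f n)) -> ~ (forall n, lt (f (S n)) (f n)).
Proof.
  intros Hbound Hlt.
  destruct (proj1 (Hn g) f Hbound (fun n => proj1 (Hlt n))) as [N HN].
  apply (proj2 (Hlt N)). apply HN. lia.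
Qed.

Lemma exists_covby_below (h g : G) : lt h g -> exists k, covby h k /\ le k g.
Proof.
  intro Hhg.
  destruct (exists_extremal _ (fun k => lt h k /\ le k g) (fun x y => lt y x) g
              (conj Hhg (le_refl G g))) as [k [[Hhk Hkg] Hmin]].
  { intros f Hf. apply (no_bounded_descent h). intro n. apply (Hf n). }
  exists k. split; [split; [exact Hhk |] | exact Hkg].
  intros [z [Hhz Hzk]]. apply (Hmin z); [| exact Hzk].
  split; [exact Hhz | exact (le_trans G _ _ _ (proj1 Hzk) Hkg)].
Qed.

Lemma degp_exists (g : G) : negcone g -> exists k, degp g k.
Proof.
  intro Hg. apply NNPP; intro Hbad.
  destruct (exists_extremal _ (fun h => negcone h /\ ~ exists k, degp h k) lt g
              (conj Hg Hbad)) as [h [[Hh Hhbad] Hmax]].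
  { intros f Hf. apply (no_bounded_ascent e). intro n. apply (Hf n). }
  assert (Hhe : lt h e).
  { split; [exact Hh |]. intros ->. apply Hhbad. exists 0. exact degp_e. }
  destruct (exists_covby_below _ _ Hhe) as [k [Hhk Hke]].
  destruct (classic (exists m, degp k m)) as [[m Hm] | Hkbad].
  - apply Hhbad. exists (S m). exact (degp_covby _ _ _ Hhk Hm).
  - exact (Hmax k (conj Hke Hkbad) (proj1 Hhk)).
Qed.

Section Modular.

Hypothesis Hmod : modular G.

Lemma covby_join (g a b : G) : covby g a -> covby g b -> a <> b -> covby a (join a b).
Proof.
  intros Hga Hgb Hab. split.
  - split; [apply join_l |]. intro Heq.
    destruct Hga as [_ Hnone]. apply Hnone. exists b.
    split; [exact (proj1 Hgb) |]. split; [rewrite Heq; apply join_r | congruence].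
  - intros [z [Haz Hzj]].
    assert (Hgz : le g z) by exact (le_trans G _ _ _ (proj1 (proj1 Hga)) (proj1 Haz)).
    destruct (covby_between g b (meet b z) Hgb) as [Hw | Hw].
    + apply meet_glb; [exact (proj1 (proj1 Hgb)) | exact Hgz].
    + apply meet_l.
    + (* modularity: a \/ (b /\ z) = (a \/ b) /\ z = z, while a \/ g = a *)
      pose proof (Hmod a b z (proj1 Haz)) as Hm.
      rewrite Hw, join_eq_l, meet_eq_r in Hm by
        first [exact (proj1 (proj1 Hga)) | exact (proj1 Hzj)].
      exact (proj2 Haz Hm).
    + apply (proj2 Hzj). apply le_anti; [exact (proj1 Hzj) |].
      apply join_lub; [exact (proj1 Haz) | rewrite <- Hw; apply meet_r].
Qed.

Lemma degp_unique (g : G) (n m : nat) : degp g n -> degp g m -> n = m.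
Proof.
  revert g m. induction n as [| n IH]; intros g m Hn' Hm.
  - rewrite (degp_0 _ Hn') in Hm. symmetry. exact (degp_e_inv _ Hm).
  - destruct m as [| m].
    + rewrite (degp_0 _ Hm) in Hn'. exact (degp_e_inv _ Hn').
    + destruct (degp_SP _ _ Hn') as [a [Hga Ha]].
      destruct (degp_SP _ _ Hm) as [b [Hgb Hb]].
      destruct (classic (a = b)) as [<- | Hab]; [f_equal; exact (IH _ _ Ha Hb) |].
      destruct (degp_exists (join a b)) as [p Hp].
      { apply join_lub; eapply degp_negcone; eassumption. }
      pose proof (degp_covby _ _ _ (covby_join _ _ _ Hga Hgb Hab) Hp) as Ha'.
      pose proof (covby_join _ _ _ Hgb Hga (not_eq_sym Hab)) as Hbj.
      rewrite join_comm in Hbj.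
      pose proof (degp_covby _ _ _ Hbj Hp) as Hb'.
      assert (n = S p) as -> by exact (IH _ _ Ha Ha').
      f_equal. exact (IH _ _ Hb' Hb).
Qed.

Lemma degnP (g : G) : negcone g -> degp g (degn g).
Proof. intro Hg. unfold degn. apply epsilon_spec, degp_exists, Hg. Qed.

Lemma degn_eq (g : G) (k : nat) : degp g k -> degn g = k.
Proof. intro Hk. exact (degp_unique g _ _ (degnP g (degp_negcone _ _ Hk)) Hk). Qed.

Lemma degnM (a b : G) : negcone a -> negcone b -> degn (mul a b) = degn a + degn b.
Proof. intros Ha Hb. apply degn_eq, degp_cat; apply degnP; assumption. Qed.

Lemma deg_fraction (g a1 a2 : G) : negcone a1 -> negcone a2 -> mul a2 g = a1 ->
  deg g = (Z.of_nat (degn a1) - Z.of_nat (degn a2))%Z.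
Proof.
  intros Ha1 Ha2 Hg. unfold deg.
  destruct (negcone_left_ore a2 (denom g)) as [c [d [Hc [Hd Hcd]]]].
  assert (Hcd1 : mul c a1 = mul d (mul (denom g) g)) by (rewrite <- Hg, !mulA, Hcd; reflexivity).
  apply (f_equal degn) in Hcd, Hcd1.
  rewrite !degnM in Hcd, Hcd1
    by first [assumption | apply negcone_denom | apply negcone_denom_mul].
  lia.
Qed.

Lemma deg_negcone (g : G) : negcone g -> deg g = Z.of_nat (degn g).
Proof.
  intro Hg. rewrite (deg_fraction g g e Hg (le_refl G e) (mul1g G g)).
  rewrite (degn_eq e 0 degp_e). lia.
Qed.

Lemma deg_mul (x y : G) : deg (mul x y) = (deg x + deg y)%Z.
Proof.
  destruct (negcone_fraction x) as [a1 [a2 [Ha1 [Ha2 Hx]]]].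
  destruct (negcone_fraction y) as [b1 [b2 [Hb1 [Hb2 Hy]]]].
  destruct (negcone_left_ore a1 b2) as [c [d [Hc [Hd Hcd]]]].
  assert (Hxy : mul (mul c a2) (mul x y) = mul d b1).
  { rewrite <- Hy, !mulA, <- Hcd, <- Hx, !mulA. reflexivity. }
  rewrite (deg_fraction _ _ _ (negcone_mul _ _ Hd Hb1) (negcone_mul _ _ Hc Ha2) Hxy),
    (deg_fraction _ _ _ Ha1 Ha2 Hx), (deg_fraction _ _ _ Hb1 Hb2 Hy).
  apply (f_equal degn) in Hcd.
  rewrite !degnM in Hcd |- * by assumption.
  lia.
Qed.

Lemma hom_Z_eq_deg (deg2 : G -> Z) : group_hom_Z deg2 ->
  (forall g, negcone g -> deg2 g = Z.of_nat (degn g)) -> forall g, deg2 g = deg g.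
Proof.
  intros Hhom Hagree g.
  rewrite (deg_fraction g _ _ (negcone_denom_mul g) (negcone_denom g) eq_refl).
  pose proof (Hhom (denom g) g) as Hmul.
  rewrite (Hagree _ (negcone_denom_mul g)), (Hagree _ (negcone_denom g)) in Hmul.
  lia.
Qed.

End Modular.
End Noetherian.
End RightLGroup.

Theorem mainTheorem3 (G : right_lgroup) (Hmod : modular G) (Hnoeth : noetherian G) :
  exists deg : G -> Z,
    group_hom_Z deg /\
    (forall (g : G) (k : nat), negcone g -> degp g k -> deg g = Z.of_nat k) /\
    (forall (g1 g2 : G) (k1 k2 : nat), negcone g1 -> negcone g2 ->
       degp g1 k1 -> degp g2 k2 ->
       deg (mul (inv g2) g1) = (Z.of_nat k1 - Z.of_nat k2)%Z) /\
    (forall deg2 : G -> Z, group_hom_Z deg2 ->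
       (forall (g : G) (k : nat), negcone g -> degp g k -> deg2 g = Z.of_nat k) ->
       forall g : G, deg2 g = deg g).
Proof.
  exists (deg G). split; [| split; [| split]].
  - intros x y. exact (deg_mul G Hnoeth Hmod x y).
  - intros g k Hg Hk.
    rewrite (deg_negcone G Hnoeth Hmod g Hg), (degn_eq G Hnoeth Hmod g k Hk).
    reflexivity.
  - intros g1 g2 k1 k2 Hg1 Hg2 Hk1 Hk2.
    rewrite (deg_fraction G Hnoeth Hmod _ _ _ Hg1 Hg2 (mulKVg G g2 g1)).
    rewrite (degn_eq G Hnoeth Hmod g1 k1 Hk1), (degn_eq G Hnoeth Hmod g2 k2 Hk2).
    reflexivity.
  - intros deg2 Hhom Hagree. apply (hom_Z_eq_deg G Hnoeth Hmod deg2 Hhom).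
    intros g Hg. exact (Hagree g _ Hg (degnP G Hnoeth g Hg)).
Qed.
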